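(* Let $w=w_1\cdots w_n$ be a word of distinct positive integers avoiding $31245,32145,31254,32154$, with positions of left-to-right maxima $l_1<\dots<l_s$ and of right-to-left maxima $r_1<\dots<r_t$ ($l_s=r_1$). Assume $t>1$, $l_s>s$, $s>2$ and $w_{l_{s-1}}>w_{r_2}$. Let $x=\max(\{j: 1\le j<l_{s-1},\ w_j>w_{j+1}\}\cup\{0\})$. Then one of the following holds: (II-1) $x=0$; (II-2) $x\ne0$ and $l_s=l_{s-1}+1$; (II-3) $x\neq0$, $l_s>l_{s-1}+1$, the set $\{i: l_{s-1}<i<l_s,\ w_x<w_i<w_{l_{s-1}}\}$ is nonempty, and with $k$ its maximum we have $w_x<w_j<w_{l_{s-1}}$ for all $l_{s-1}<j\le k$ and $w_j<w_x$ for all $k<j<l_s$; moreover, if $k<l_s-1$ then $w_x>w_{r_2}$; (II-4) $x\ne0$, $l_s>l_{s-1}+1$, $w_j<w_x$ for all $l_{s-1}<j<l_s$, and $w_x>w_{r_2}$.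
   Context: A word of distinct positive integers avoids a pattern $P$ (a permutation of $[m]$) if no subsequence of length $m$ is order-isomorphic to $P$. A left-to-right (resp. right-to-left) maximum of $w$ is a letter $w_i$ greater than all letters to its left (resp. right). *)

From mathcomp Require Import all_boot.
Set Implicit Arguments. Unset Strict Implicit. Unset Printing Implicit Defensive.

(* A word w = w_1 ... w_n is a seq nat; letters are 1-indexed. *)
Definition letter (w : seq nat) (i : nat) : nat := nth 0 w i.-1.

Definition order_iso (u P : seq nat) : Prop :=
  size u = size P /\
  forall i j, i < size u -> j < size u -> (nth 0 u i < nth 0 u j) = (nth 0 P i < nth 0 P j).

Definition avoids (w P : seq nat) : Prop :=
  forall u : seq nat, subseq u w -> ~ order_iso u P.

Definition ltr_max_pos (w : seq nat) : seq nat :=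
  [seq i <- iota 1 (size w) |
     all (fun j => letter w j < letter w i) (iota 1 i.-1)].

Definition rtl_max_pos (w : seq nat) : seq nat :=
  [seq i <- iota 1 (size w) |
     all (fun j => letter w j < letter w i) (iota i.+1 (size w - i))].

Definition lpos (w : seq nat) (k : nat) : nat := nth 0 (ltr_max_pos w) k.-1.
Definition rpos (w : seq nat) (k : nat) : nat := nth 0 (rtl_max_pos w) k.-1.

Definition xdesc (w : seq nat) (L : nat) : nat :=
  \max_(1 <= j < L | letter w j.+1 < letter w j) j.

From mathcomp Require Import all_boot zify.

(* The four forbidden patterns say together that no letter is followed first by
   two smaller letters and then by two larger ones.  Let x > 0 be the last
   descent before l_{s-1}, so w_{x+1} < w_x < w_{l_s}, and look at the gap
   l_{s-1} < j < l_s, all of whose letters lie below w_{l_{s-1}}.  A gap letter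
   w_j < w_x followed by a gap letter w_k > w_x would give the occurrence
   x, x+1, j, k, l_s; so the gap letters above w_x form an initial segment of the
   gap.  If some gap letter w_j lies below w_x, the positions x, x+1, j, l_s, r_2
   force w_{r_2} < w_x. *)

Lemma subseq_map_nth (T : eqType) (x0 : T) (s : seq T) (idx : seq nat) :
  sorted ltn idx -> all (gtn (size s)) idx -> subseq [seq nth x0 s i | i <- idx] s.
Proof.
move=> idx_sorted idx_lt.
have -> : idx = [seq i <- iota 0 (size s) | i \in idx].
  apply: (irr_sorted_eq ltn_trans ltnn) => //.
    exact/sorted_filter/iota_ltn_sorted/ltn_trans.
  move=> i; rewrite mem_filter mem_iota add0n.
  by case: (boolP (i \in idx)) => // /(allP idx_lt).
rewrite filter_mask map_mask -[s in subseq _ s](mkseq_nth x0 s).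
exact: mask_subseq.
Qed.

Lemma sorted_ltn_notin_between [s : seq nat] [k j : nat] :
  sorted ltn s -> nth 0 s k < j < nth 0 s k.+1 -> j \notin s.
Proof.
move=> s_sorted /andP[kj jk]; apply/negP => js.
have k1_lt : k.+1 < size s by rewrite ltnNge; apply/negP => /(nth_default 0) E; rewrite E in jk.
have s_leq : sorted leq s by move: s_sorted; rewrite ltn_sorted_uniq_leq => /andP[].
have nth_mono := sorted_leq_nth leq_trans leqnn 0 s_leq.
have js' : index j s < size s by rewrite index_mem.
case: (leqP (index j s) k) => [ik|ki].
  have := nth_mono _ _ js' (ltnW k1_lt) ik; rewrite nth_index //; lia.
have := nth_mono _ _ k1_lt js' ki; rewrite nth_index //; lia.
Qed.

Lemma ltr_max_sorted (w : seq nat) : sorted ltn (ltr_max_pos w).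
Proof. exact/sorted_filter/iota_ltn_sorted/ltn_trans. Qed.

Lemma rtl_max_sorted (w : seq nat) : sorted ltn (rtl_max_pos w).
Proof. exact/sorted_filter/iota_ltn_sorted/ltn_trans. Qed.

Lemma ltr_maxP [w : seq nat] [i : nat] : i \in ltr_max_pos w ->
  0 < i <= size w /\ forall j, 0 < j < i -> letter w j < letter w i.
Proof.
rewrite mem_filter mem_iota => /andP[/allP i_max i_range]; split; first lia.
by move=> j j_lt; apply: i_max; rewrite mem_iota; lia.
Qed.

Lemma rtl_maxP [w : seq nat] [i : nat] : i \in rtl_max_pos w ->
  0 < i <= size w /\ forall j, i < j <= size w -> letter w j < letter w i.
Proof.
rewrite mem_filter mem_iota => /andP[/allP i_max i_range]; split; first lia.
by move=> j j_gt; apply: i_max; rewrite mem_iota; lia.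
Qed.

Lemma not_ltr_maxP (w : seq nat) i : 0 < i <= size w -> i \notin ltr_max_pos w ->
  exists2 j, 0 < j < i & letter w i <= letter w j.
Proof.
move=> i_range; rewrite mem_filter mem_iota [_ < _ + _]ltnS i_range andbT.
by case/allPn=> j; rewrite mem_iota -leqNgt => j_lt; exists j => //; lia.
Qed.

Lemma ltr_max_le_rtl_max [w : seq nat] [i j : nat] :
  i \in ltr_max_pos w -> j \in rtl_max_pos w -> i <= j.
Proof.
case/ltr_maxP=> i_range i_max; case/rtl_maxP=> j_range j_max.
rewrite leqNgt; apply/negP => ji.
by have := i_max j ltac:(lia); have := j_max i ltac:(lia); lia.
Qed.

Lemma letter_le_ltr_max (w : seq nat) k j :
  k.+1 < size (ltr_max_pos w) -> 0 < j < nth 0 (ltr_max_pos w) k.+1 ->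
  letter w j <= letter w (nth 0 (ltr_max_pos w) k).
Proof.
move=> k1_lt.
have [Lk1_range _] := ltr_maxP (mem_nth 0 k1_lt).
have [_ Lk_max] := ltr_maxP (mem_nth 0 (ltnW k1_lt)).
have gap := sorted_ltn_notin_between (ltr_max_sorted w) (k := k).
move: (nth 0 _ k) (nth 0 _ k.+1) Lk1_range Lk_max gap => a b b_range a_max gap.
elim/ltn_ind: j => j IH j_range.
case: (ltngtP j a) => [j_lt|a_lt|-> //]; first by apply/ltnW/a_max; lia.
have [j' j'_lt j_le_j'] := not_ltr_maxP w j ltac:(lia) (gap j ltac:(lia)).
by apply: leq_trans j_le_j' (IH j' _ _); lia.
Qed.

Lemma xdesc_spec [w : seq nat] [L : nat] : xdesc w L != 0 ->
  0 < xdesc w L < L /\ letter w (xdesc w L).+1 < letter w (xdesc w L).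
Proof.
rewrite /xdesc big_seq_cond.
apply: (big_ind (fun m => m != 0 -> 0 < m < L /\ letter w m.+1 < letter w m)) => //.
  by move=> m n Km Kn; rewrite /maxn; case: ifP.
by move=> j /andP[]; rewrite mem_index_iota.
Qed.

Lemma order_iso_3xx45 [va vb vc vd ve : nat] :
  vb < va -> vc < va -> va < vd -> va < ve -> vb != vc -> vd != ve ->
  exists2 P, P \in [:: [:: 3; 1; 2; 4; 5]; [:: 3; 2; 1; 4; 5];
                       [:: 3; 1; 2; 5; 4]; [:: 3; 2; 1; 5; 4]]
           & order_iso [:: va; vb; vc; vd; ve] P.
Proof.
move=> ba ca ad ae bc de.
case: (ltnP vb vc) => bc'; case: (ltnP vd ve) => de';
  [exists [:: 3; 1; 2; 4; 5] | exists [:: 3; 1; 2; 5; 4]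
  |exists [:: 3; 2; 1; 4; 5] | exists [:: 3; 2; 1; 5; 4]];
  rewrite ?inE ?eqxx ?orbT //; split=> // i j;
  do 5?[case: i => [|i]]; do 5?[case: j => [|j]]; rewrite //=; lia.
Qed.

Section DistinctLetters.

Variable w : seq nat.
Hypothesis w_uniq : uniq w.

Lemma letter_neq i j : 0 < i <= size w -> 0 < j <= size w -> i != j ->
  letter w i != letter w j.
Proof.
move: i j => [|i] [|j] //= i_range j_range ij.
rewrite /letter nth_uniq //=; lia.
Qed.

Lemma letter_ltNgt i j : 0 < i <= size w -> 0 < j <= size w -> i != j ->
  (letter w i < letter w j) = ~~ (letter w j < letter w i).
Proof.
move=> i_range j_range ij.
by rewrite ltnNge leq_eqVlt (negbTE (letter_neq j i _ _ _)) // eq_sym.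
Qed.

Lemma letter_ltr_max_between k j :
  k.+1 < size (ltr_max_pos w) ->
  nth 0 (ltr_max_pos w) k < j < nth 0 (ltr_max_pos w) k.+1 ->
  letter w j < letter w (nth 0 (ltr_max_pos w) k).
Proof.
move=> k1_lt j_range.
have [b_range _] := ltr_maxP (mem_nth 0 k1_lt).
have [a_range _] := ltr_maxP (mem_nth 0 (ltnW k1_lt)).
have j_le := letter_le_ltr_max w k j k1_lt.
move: (nth 0 _ k) (nth 0 _ k.+1) j_range b_range a_range j_le => a b *.
rewrite ltn_neqAle letter_neq ?j_le //; lia.
Qed.

Section Avoidance.

Hypotheses (avoid31245 : avoids w [:: 3; 1; 2; 4; 5])
           (avoid32145 : avoids w [:: 3; 2; 1; 4; 5])
           (avoid31254 : avoids w [:: 3; 1; 2; 5; 4])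
           (avoid32154 : avoids w [:: 3; 2; 1; 5; 4]).

Lemma no_3xx45 a b c d e :
  0 < a -> a < b -> b < c -> c < d -> d < e -> e <= size w ->
  letter w b < letter w a -> letter w c < letter w a ->
  letter w a < letter w d -> letter w a < letter w e -> False.
Proof.
move=> a_pos ab bc cd de e_le ba ca ad ae.
have [P P_pat iso] := order_iso_3xx45 ba ca ad ae
  (letter_neq b c ltac:(lia) ltac:(lia) ltac:(lia))
  (letter_neq d e ltac:(lia) ltac:(lia) ltac:(lia)).
have sub : subseq [seq letter w i | i <- [:: a; b; c; d; e]] w.
  rewrite (map_comp (nth 0 w) predn); apply: subseq_map_nth => /=; lia.
by move: P_pat; rewrite !inE => /or4P[]/eqP P_def; subst P;
  [apply: avoid31245 sub iso | apply: avoid32145 sub iso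
  |apply: avoid31254 sub iso | apply: avoid32154 sub iso].
Qed.

Lemma descent_forces_below a c d e :
  0 < a -> a.+1 < c -> c < d -> d < e -> e <= size w ->
  letter w a.+1 < letter w a -> letter w c < letter w a -> letter w a < letter w d ->
  letter w e < letter w a.
Proof.
move=> *; rewrite letter_ltNgt; try lia.
by apply/negP => ae; apply: (no_3xx45 a a.+1 c d e); lia.
Qed.

Section DescentBeforeGap.

Variables x L M R : nat.
Hypotheses (x_pos : 0 < x) (x_lt_L : x < L) (L_lt_M : L.+1 < M)
           (M_lt_R : M < R) (R_le : R <= size w).
Hypotheses (x_descent : letter w x.+1 < letter w x) (x_lt_M : letter w x < letter w M)
           (below_L : forall j, L < j < M -> letter w j < letter w L).

Lemma gap_above_x_closed_left j k :
  L < j <= k -> k < M -> letter w x < letter w k -> letter w x < letter w j.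
Proof.
move=> j_range kM xk; case: (eqVneq j k) => [-> // | jk].
rewrite letter_ltNgt; try lia; apply/negP => jx.
by have := descent_forces_below x j k M; lia.
Qed.

Lemma gap_below_x_forces_R j :
  L < j < M -> letter w j < letter w x -> letter w R < letter w x.
Proof. by move=> *; apply: (descent_forces_below x j M R); lia. Qed.

Lemma gap_shape :
  (exists k,
     [/\ (L < k < M) /\ (letter w x < letter w k < letter w L),
         (forall i, L < i < M -> letter w x < letter w i < letter w L -> i <= k),
         (forall j, L < j <= k -> letter w x < letter w j < letter w L),
         (forall j, k < j < M -> letter w j < letter w x) &
         (k < M.-1 -> letter w R < letter w x)])
  \/ ((forall j, L < j < M -> letter w j < letter w x) /\ letter w R < letter w x).
Proof.
pose above_x i := (L < i < M) && (letter w x < letter w i).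
have below_x j : L < j < M -> ~~ above_x j -> letter w j < letter w x.
  by move=> jM; rewrite /above_x jM /= letter_ltNgt //; lia.
case: (boolP (has above_x (iota 0 M))) => [/hasP[i _ above_i] | /hasPn none].
  left; have bounded i' : above_x i' -> i' <= M by case/andP=> /andP[_ /ltnW].
  have [k /andP[kM xk] k_max] := ex_maxnP (ex_intro _ i above_i) bounded.
  have right_of_k j : k < j < M -> letter w j < letter w x.
    by move=> j_range; apply: below_x; [lia | apply/negP => /k_max; lia].
  exists k; split=> [| i' i'_range /andP[xi' _] | j j_range | // | kM1].
  - by split; rewrite ?kM ?xk ?below_L.
  - by apply: k_max; rewrite /above_x i'_range.
  - rewrite below_L ?andbT; last lia.
    by apply: (gap_above_x_closed_left j k); lia.
  - by apply: (gap_below_x_forces_R k.+1) => //; [lia | apply: right_of_k; lia].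
right; have below j : L < j < M -> letter w j < letter w x.
  by move=> j_range; apply: below_x => //; apply: none; rewrite mem_iota; lia.
by split=> //; apply: (gap_below_x_forces_R L.+1) => //; [lia | apply: below; lia].
Qed.

End DescentBeforeGap.

End Avoidance.

End DistinctLetters.

Theorem lemma3p2 (w : seq nat) :
  uniq w -> 0 \notin w ->
  avoids w [:: 3; 1; 2; 4; 5] -> avoids w [:: 3; 2; 1; 4; 5] ->
  avoids w [:: 3; 1; 2; 5; 4] -> avoids w [:: 3; 2; 1; 5; 4] ->
  let s := size (ltr_max_pos w) in
  let t := size (rtl_max_pos w) in
  let ls := lpos w s in
  let ls1 := lpos w s.-1 in
  let r2 := rpos w 2 in
  let x := xdesc w ls1 in
  1 < t -> s < ls -> 2 < s -> letter w r2 < letter w ls1 ->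
  (* (II-1) *)
  x = 0
  \/
  (* (II-2) *)
  (x != 0 /\ ls = ls1.+1)
  \/
  (* (II-3) *)
  (x != 0 /\ ls1.+1 < ls /\
   exists k,
     [/\ (ls1 < k < ls) /\ (letter w x < letter w k < letter w ls1),
         (forall i, ls1 < i < ls -> letter w x < letter w i < letter w ls1 -> i <= k),
         (forall j, ls1 < j <= k -> letter w x < letter w j < letter w ls1),
         (forall j, k < j < ls -> letter w j < letter w x) &
         (k < ls.-1 -> letter w r2 < letter w x)])
  \/
  (* (II-4) *)
  [/\ x != 0, ls1.+1 < ls,
      (forall j, ls1 < j < ls -> letter w j < letter w x) &
      letter w r2 < letter w x].
Proof.
move=> w_uniq _ avoid1 avoid2 avoid3 avoid4 s t ls ls1 r2 x t_gt1 _ s_gt2 _.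
have ls_lt : s.-2.+1 < size (ltr_max_pos w) by rewrite -/s; lia.
have ls_def : ls = nth 0 (ltr_max_pos w) s.-2.+1 by rewrite /ls /lpos; congr nth; lia.
have [ls_range ls_max] := ltr_maxP (mem_nth 0 ls_lt); rewrite -ls_def in ls_range ls_max.
have ls1_ls : ls1 < ls.
  by rewrite ls_def; apply: (sorted_ltn_nth ltn_trans 0 (ltr_max_sorted w)); rewrite ?inE //; lia.
have gap j : ls1 < j < ls -> letter w j < letter w ls1.
  by rewrite ls_def; apply: letter_ltr_max_between.
have r2_lt : 1 < size (rtl_max_pos w) by [].
have [r2_range _] := rtl_maxP (i := r2) (mem_nth 0 r2_lt).
have ls_r2 : ls < r2.
  have := ltr_max_le_rtl_max (mem_nth 0 ls_lt) (mem_nth 0 (ltnW r2_lt)).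
  have := sorted_ltn_nth ltn_trans 0 (rtl_max_sorted w) 0 1 (ltnW r2_lt) r2_lt.
  by rewrite -ls_def /r2 /rpos /=; lia.
case: (eqVneq x 0) => [x0 | x_neq0]; [by left | right].
have [x_range x_descent] := xdesc_spec x_neq0.
case: (eqVneq ls ls1.+1) => [ls_eq | ls_neq]; [by left | right].
have x_lt_ls : letter w x < letter w ls by apply: ls_max; lia.
have [[k k_spec] | [below r2_below]] :=
  @gap_shape w w_uniq avoid1 avoid2 avoid3 avoid4 x ls1 ls r2
            ltac:(lia) ltac:(lia) ltac:(lia) ls_r2
            ltac:(lia) x_descent x_lt_ls gap.
- by left; split=> //; split; [lia | exists k].
- by right; split=> //; lia.
Qed.
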